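(* Every nonempty saturated subspace of an $S^{\ast}$-well-filtered space is $S^{\ast}$-well-filtered.
   Context: All spaces are $T_0$. The specialization order of $X$ is given by $x\le y$ iff $x\in cl(\{y\})$; ${\uparrow}$ is taken with respect to it; a subset is saturated if it equals the intersection of all open sets containing it (equivalently, it is an upper set in the specialization order). $K(X)$ denotes the set of all nonempty compact saturated subsets of $X$; a family in $K(X)$ is filtered if any two members contain a common member. $X$ is $S^{\ast}$-well-filtered if for every filtered family $\{K_i\mid i\in I\}\subseteq K(X)$, every $G\in K(X)$ and every nonempty open $U$, $\bigcap_{i\in I}K_i\cap G\subseteq U$ implies $K_i\cap G\subseteq U$ for some $i$. *)

From HB Require Import structures.
From mathcomp Require Import all_boot all_order all_algebra.
From mathcomp Require Import all_classical all_reals all_analysis.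
Set Implicit Arguments. Unset Strict Implicit. Unset Printing Implicit Defensive.
Local Open Scope classical_set_scope.

Section Defs.
Context {T : topologicalType}.

Definition spec_le (x y : T) : Prop := closure [set y] x.

Definition saturated (A : set T) : Prop :=
  A = \bigcap_(U in [set U : set T | open U /\ A `<=` U]) U.

Definition KX (K : set T) : Prop := K !=set0 /\ compact K /\ saturated K.

Definition filtered_family (I : Type) (K : I -> set T) : Prop :=
  inhabited I /\ (forall i, KX (K i)) /\
  (forall i j, exists k, K k `<=` K i /\ K k `<=` K j).

End Defs.

Definition S_star_well_filtered (X : topologicalType) : Prop :=
  forall (I : Type) (K : I -> set X) (G U : set X),
    filtered_family K -> KX G -> open U -> U !=set0 ->
    (\bigcap_i K i) `&` G `<=` U -> exists i, K i `&` G `<=` U.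

From HB Require Import structures.
From mathcomp Require Import all_boot all_order all_algebra.
From mathcomp Require Import all_classical all_reals all_analysis.
Local Open Scope classical_set_scope.

(* Push every datum of the subspace Y = A into X by taking the saturation of
   its image.  Compactness, nonemptiness and filteredness survive, so the
   S*-well-filteredness of X applies.  Since A is saturated, the saturations
   stay inside A, and since the open and the compact saturated sets of Y are
   traces of those of X, the resulting inclusion pulls back to Y. *)

Section Saturation.
Variable T : topologicalType.

Definition saturation (B : set T) : set T :=
  \bigcap_(U in [set U : set T | open U /\ B `<=` U]) U.

Lemma subset_saturation (B : set T) : B `<=` saturation B.
Proof. by move=> x Bx U [_ BU]; exact: BU. Qed.

Lemma saturation_min (B U : set T) : open U -> B `<=` U -> saturation B `<=` U.
Proof. by move=> oU BU x; apply. Qed.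

Lemma saturation_subset (B C : set T) : B `<=` C -> saturation B `<=` saturation C.
Proof. by move=> BC x Bx U [oU CU]; apply: Bx; split => // y /BC /CU. Qed.

Lemma saturated_saturation (B : set T) : saturated (saturation B).
Proof.
apply/seteqP; split; first by move=> x Bx U [_ BU]; exact: BU.
by move=> x Bx U [oU BU]; apply: Bx; split => //; exact: saturation_min.
Qed.

(* [K] meets the cluster set of every proper filter containing [saturation K]:
   otherwise, by near covering, eventually [K] misses the closure of [i], and
   the open complement of that closure excludes [i] from [saturation K]. *)
Lemma compact_saturation (K : set T) : compact K -> compact (saturation K).
Proof.
move=> /compact_near_coveringP cK F PF FsatK.
suff [x [Kx Fx]] : K `&` cluster F !=set0.
  by exists x; split => //; exact: subset_saturation.
apply: contrapT => noclust.
have far x : K x -> \forall x' \near x & i \near F, ~ closure [set i] x'.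
  move=> Kx; have : ~ cluster F x by move=> Fx; apply: noclust; exists x.
  move=> /existsNP [B /existsNP [U /not_implyP [FB /not_implyP [Ux BU0]]]].
  exists (U°, B) => [|[x' i] [/= Ux' Bi] cli]; first by split=> //; exact: nbhs_interior.
  have [_ [/= -> Ui]] := cli U° (open_nbhs_nbhs (conj (@open_interior _ U) Ux')).
  by apply: BU0; exists i; split => //; exact: interior_subset.
have [i [satKi Kfar]] := filter_ex (filterI FsatK (cK _ F _ PF far)).
have := saturation_min _ _ (closed_openC (@closed_closure _ [set i])) Kfar i satKi.
by apply; exact: subset_closure.
Qed.

End Saturation.
Arguments saturation {T} B.

Section SaturatedImage.
Context {Y X : topologicalType} {f : Y -> X}.
Hypothesis cont_f : continuous f.

Lemma KX_saturation_image (K : set Y) : KX K -> KX (saturation (f @` K)).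
Proof.
move=> [[y Ky] [cK _]]; split; last split.
- by exists (f y); apply: subset_saturation; exists y.
- by apply/compact_saturation/continuous_compact => //; exact: continuous_subspaceT.
- exact: saturated_saturation.
Qed.

Lemma filtered_family_saturation_image (I : Type) (K : I -> set Y) :
  filtered_family K -> filtered_family (fun i => saturation (f @` K i)).
Proof.
move=> [inhI [KK Kfilt]]; split; first exact: inhI.
split=> [i|i j]; first exact: KX_saturation_image.
have [k [ki kj]] := Kfilt i j; exists k.
by split; apply: saturation_subset; exact: image_subset.
Qed.

End SaturatedImage.

Section Subspace.
Context {X : topologicalType} {A : set X}.
Local Notation Y := (set_type A).

Lemma continuous_set_val : continuous (set_val : Y -> X).
Proof. exact: (@initial_continuous Y X set_val). Qed.

Lemma saturation_val_subset (B : set Y) :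
  saturated A -> saturation (set_val @` B) `<=` A.
Proof.
move=> sA; rewrite [Z in _ `<=` Z]sA.
by apply: saturation_subset => _ [y _ <-]; exact: set_valP.
Qed.

Lemma saturated_val (K : set Y) (y : Y) : saturated K ->
  saturation (set_val @` K) (set_val y) -> K y.
Proof.
move=> sK Ky; rewrite sK => _ [[V oV <-] KV]; apply: Ky; split => //.
by move=> _ [z Kz <-]; exact: KV.
Qed.

End Subspace.

Theorem mainTheorem15 (X : topologicalType) (A : set X) :
  kolmogorov_space X -> S_star_well_filtered X ->
  A !=set0 -> saturated A ->
  S_star_well_filtered (set_type A).
Proof.
move=> _ swfX _ sA I K G U famK KG [V oV <-] [u Uu] KGU.
have [||||i KGiV] := swfX I (fun i => saturation (set_val @` K i))
  (saturation (set_val @` G)) V _ _ oV.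
- exact: (filtered_family_saturation_image continuous_set_val).
- exact: (KX_saturation_image continuous_set_val).
- by exists (set_val u).
- move=> x [xK xG].
  pose y : set_type A := exist _ x (mem_set (saturation_val_subset G sA x xG)).
  have [_ [_ sG]] := KG.
  apply: (KGU y); split; last exact (saturated_val _ y sG xG).
  move=> i _; have [_ [_ sKi]] := famK.2.1 i.
  exact (saturated_val _ y sKi (xK i Logic.I)).
- exists i => y [Ky Gy]; apply: KGiV.
  by split; apply: subset_saturation; exists y.
Qed.
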